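(* With the conventions $A_0=1$, $B_0=0$, the tiling numbers satisfy, for all $n\ge2$, $$A_{2n}=6A_{2n-2}-A_{2n-4}-2,\qquad A_{2n+1}=6A_{2n-1}-A_{2n-3}+2\ (n\ge2),$$ $$B_{2n}=6B_{2n-2}-B_{2n-4}+2,\qquad B_{2n+1}=6B_{2n-1}-B_{2n-3}-2\ (n\ge2).$$
   Context: Let $s=\sqrt3/2$. Consider the standard triangular lattice in the plane whose vertices are the points $(a+b/2,\,bs)$ with $a,b\in\mathbb Z$ and whose edges are the unit segments joining lattice points in the directions $0^\circ,60^\circ,120^\circ$; it divides the plane into unit equilateral triangles called cells. A small tile is a single cell; a large tile is an equilateral triangle of side $2$ whose vertices are lattice points (so it is a union of $4$ cells; it may point up or down). For a region $R$ that is a finite union of cells, a tiling of $R$ is a finite set of small and large tiles, each contained in $R$, with pairwise disjoint interiors and union equal to $R$. For $n\ge1$, $A_n$ is the parallelogram with vertices $(0,0),(n,0),(n+1,2s),(1,2s)$ and $B_n$ is the trapezoid with vertices $(0,0),(n+1,0),(n,2s),(1,2s)$ (for $n=1$ it is a triangle of side $2$); each consists of $4n$ cells. By abuse of notation, $A_n$ and $B_n$ also denote the number of tilings of these regions. *)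

From HB Require Import structures.
From mathcomp Require Import all_boot all_order all_algebra.
From mathcomp Require Import finmap.
From mathcomp Require Import boolp classical_sets cardinality.
Set Implicit Arguments. Unset Strict Implicit. Unset Printing Implicit Defensive.
Import Order.TTheory GRing.Theory Num.Theory.

(* Lattice coordinates: the lattice point (a,b) in Z^2 is the plane point
   (a + b/2, b*sqrt3/2).
   A cell is encoded as (a, b, up):
   - up = true  : the up-triangle with vertices (a,b), (a+1,b), (a,b+1);
   - up = false : the down-triangle with vertices (a+1,b), (a,b+1), (a+1,b+1).
   Every unit cell of the triangular lattice has exactly one such code. *)
Definition cell : Type := (int * int * bool)%type.

(* A tile is either a small tile (inl c : a single cell c), or a large tile
   inr (a, b, up):
   - up = true  : the side-2 up-triangle with vertices (a,b),(a+2,b),(a,b+2);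
   - up = false : the side-2 down-triangle with vertices (a+2,b),(a,b+2),(a+2,b+2).
   Every side-2 lattice triangle has exactly one such code. *)
Definition tile : Type := (cell + (int * int * bool))%type.

Definition tile_cells (t : tile) : seq cell :=
  match t with
  | inl c => [:: c]
  | inr (a, b, true) =>
      [:: (a, b, true); (a + 1, b, true); (a, b + 1, true); (a, b, false)]
  | inr (a, b, false) =>
      [:: (a + 1, b, false); (a, b + 1, false); (a + 1, b + 1, false);
          (a + 1, b + 1, true)]
  end%R.

(* A region is a (finite) union of cells, given by its set of cells.
   Since tiles are unions of cells, two tiles have disjoint interiors iff they
   share no cell, and a set of tiles has union R iff its cells are exactly
   those of R. *)
Definition is_tiling (R : cell -> bool) (T : {fset tile}) : Prop :=
  [/\ (forall t, t \in T -> forall c, c \in tile_cells t -> R c),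
      (forall t1 t2, t1 \in T -> t2 \in T -> t1 <> t2 ->
         forall c, c \in tile_cells t1 -> c \notin tile_cells t2)
    & (forall c, R c -> exists2 t, t \in T & c \in tile_cells t)].

Definition num_tilings (R : cell -> bool) : nat :=
  #|` fset_set [set T : {fset tile} | is_tiling R T] |%fset.

(* A_n: parallelogram (0,0),(n,0),(n+1,2s),(1,2s); in lattice coordinates
   the parallelogram 0 <= a <= n, 0 <= b <= 2; its cells are the cells
   (a,b,_) with 0 <= a <= n-1, 0 <= b <= 1. *)
Definition regionA (n : nat) (c : cell) : bool :=
  let: (a, b, _) := c in
  [&& (0 <= a)%R, (a < n%:Z)%R, (0 <= b)%R & (b <= 1)%R].

(* B_n: trapezoid (0,0),(n+1,0),(n,2s),(1,2s); in lattice coordinates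
   { a >= 0, 0 <= b <= 2, a + b <= n+1 }.  A cell lies in it iff its three
   vertices do:
   up (a,b):   a >= 0, 0 <= b <= 1, a + b + 1 <= n + 1;
   down (a,b): a >= 0, 0 <= b <= 1, a + b + 2 <= n + 1. *)
Definition regionB (n : nat) (c : cell) : bool :=
  let: (a, b, up) := c in
  [&& (0 <= a)%R, (0 <= b)%R, (b <= 1)%R &
      (a + b + (if up then 1 else 2) <= n%:Z + 1)%R].

Definition A (n : nat) : nat := if n is 0 then 1 else num_tilings (regionA n).
Definition B (n : nat) : nat := if n is 0 then 0 else num_tilings (regionB n).

(* Every tiling of a region R contains exactly one tile through a given cell c of R, so the
   tilings of R are counted by summing, over the tiles through c that fit in R, the tilings of
   R minus that tile.  Peeling cells off the right end of a two-row strip in this way gives,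
   with A_{-1} = 0,
     A_{m+1} = A_m + A_{m-1} + B_m   and   B_{m+1} = 2 A_m + A_{m-1},
   hence A_m - B_m = (-1)^m and A_{m+2} = 2 A_{m+1} + A_m + (-1)^m.  The fourth-order
   recurrences follow since x^4 - 6 x^2 + 1 = (x^2 - 2 x - 1) (x^2 + 2 x - 1). *)

From HB Require Import structures.
From mathcomp Require Import all_boot all_order all_algebra.
From mathcomp Require Import finmap.
From mathcomp Require Import boolp classical_sets cardinality.
From mathcomp Require Import zify.
Import GRing.Theory Num.Theory.

Set Implicit Arguments. Unset Strict Implicit. Unset Printing Implicit Defensive.

Local Open Scope fset_scope.

(* The tilings of R form a finite set of k elements; [num_tilings] alone cannot say this, since
   it is 0 on an infinite set. *)
Definition tilings_card (R : cell -> bool) (k : nat) : Prop :=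
  exists S : {fset {fset tile}}, (forall T, is_tiling R T <-> T \in S) /\ #|` S| = k.

Lemma num_tilingsE R k : tilings_card R k -> num_tilings R = k.
Proof.
move=> [S [HS <-]]; rewrite /num_tilings.
have -> : [set T : {fset tile} | is_tiling R T]%classic = [set` S]%classic.
  by apply/seteqP; split => T /=; rewrite HS.
by rewrite set_fsetK.
Qed.

Lemma eq_tilings_card R R' k : R =1 R' -> tilings_card R k -> tilings_card R' k.
Proof. by move=> /funext ->. Qed.

Lemma tile_cells_nonempty (t : tile) : exists c, c \in tile_cells t.
Proof. by case: t => [c|[[a b] []]]; eexists; apply: mem_head. Qed.

Lemma tilings_card_empty R : R =1 pred0 -> tilings_card R 1.
Proof.
move=> R0; exists [fset fset0]; split; last by rewrite cardfs1.
move=> T; rewrite inE; split.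
- case=> inR _ _; apply/eqP/fsetP => t; rewrite inE; apply/negP => tT.
  by have [c ct] := tile_cells_nonempty t; have := inR t tT c ct; rewrite R0.
- by move/eqP=> ->; split=> // c; rewrite R0.
Qed.

Definition remove_tile (R : cell -> bool) (t : tile) (c : cell) : bool :=
  R c && (c \notin tile_cells t).

Lemma tiling_remove_tile R T t :
  is_tiling R T -> t \in T -> is_tiling (remove_tile R t) (T `\ t).
Proof.
case=> inR disj cover tT; split.
- move=> t' /fsetD1P [t't t'T] c ct'; rewrite /remove_tile (inR t' t'T c ct').
  exact: (disj t' t t'T tT (elimN eqP t't)).
- by move=> t1 t2 /fsetD1P [_ ?] /fsetD1P [_ ?]; apply: disj.
- move=> c /andP [Rc ct]; have [t' t'T ct'] := cover c Rc; exists t' => //.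
  by apply/fsetD1P; split=> //; apply: contraNneq ct => <-.
Qed.

Lemma tiling_remove_tile_notin R T t :
  is_tiling (remove_tile R t) T -> t \notin T.
Proof.
case=> inR _ _; apply/negP => tT; have [c ct] := tile_cells_nonempty t.
by have := inR t tT c ct; rewrite /remove_tile ct andbF.
Qed.

Lemma tiling_add_tile R T t :
  is_tiling (remove_tile R t) T -> all R (tile_cells t) -> is_tiling R (t |` T).
Proof.
case=> inR disj cover /allP tR; split.
- move=> t' /fset1UP [->|t'T] c ct'; first exact: tR.
  by have /andP[] := inR t' t'T c ct'.
- have outside_t t' c : t' \in T -> c \in tile_cells t' -> c \notin tile_cells t.
    by move=> t'T /(inR t' t'T) /andP[].
  move=> t1 t2 /fset1UP [->|t1T] /fset1UP [->|t2T] ne c //.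
  + by move=> ct; apply: contraTN ct => /(outside_t t2 c t2T).
  + exact: outside_t.
  + exact: disj.
- move=> c Rc; have [ct|nct] := boolP (c \in tile_cells t).
    by exists t; rewrite ?fset1U1.
  have [t' t'T ct'] := cover c (introT andP (conj Rc nct)).
  by exists t' => //; rewrite fset1Ur.
Qed.

Lemma tiling_tile_unique R T c t1 t2 : is_tiling R T -> t1 \in T -> t2 \in T ->
  c \in tile_cells t1 -> c \in tile_cells t2 -> t1 = t2.
Proof.
case=> _ disj _ t1T t2T ct1 ct2; apply: contrapT => ne.
by have := disj t1 t2 t1T t2T ne c ct1; rewrite ct2.
Qed.

Definition tiles_at (c : cell) : seq tile :=
  let: (a, b, up) := c in
  if up then [:: inl c; inr (a, b, true); inr (a - 1, b, true);
                 inr (a, b - 1, true); inr (a - 1, b - 1, false)]%R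
  else [:: inl c; inr (a, b, true); inr (a - 1, b, false);
           inr (a, b - 1, false); inr (a - 1, b - 1, false)]%R.

Lemma tiles_atP c t : c \in tile_cells t -> t \in tiles_at c.
Proof.
case: t => [c'|[[x y] []]] /=.
- by rewrite inE => /eqP ->; case: c' => [[a b] []]; rewrite /= mem_head.
- by rewrite !inE => /or4P [] /eqP ->; rewrite /= !inE ?addrK ?eqxx ?orbT.
- by rewrite !inE => /or4P [] /eqP ->; rewrite /= !inE ?addrK ?eqxx ?orbT.
Qed.

Section PeelCell.

Variables (R : cell -> bool) (c : cell) (L : seq tile) (k : tile -> nat).
Hypotheses (Rc : R c) (uniqL : uniq L).
Hypothesis L_fit : forall t, t \in L -> (c \in tile_cells t) && all R (tile_cells t).
Hypothesis L_complete :
  forall t, t \in tiles_at c -> all R (tile_cells t) -> t \in L.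
Hypothesis L_card : forall t, t \in L -> tilings_card (remove_tile R t) (k t).

Lemma tilings_card_with_tile t : t \in L ->
  exists S : {fset {fset tile}},
    (forall T, T \in S <-> is_tiling R T /\ t \in T) /\ #|` S| = k t.
Proof.
move=> tL; have /andP [_ tR] := L_fit tL.
have [S [HS <-]] := L_card tL.
exists ((fun T => t |` T) @` S); split.
- move=> T; split.
    by case/imfsetP => T0 /HS T0t ->; rewrite fset1U1; split=> //; apply: tiling_add_tile.
  case=> TR tT; apply/imfsetP; exists (T `\ t); last by rewrite fsetD1K.
  by apply/HS; apply: tiling_remove_tile.
- apply: card_in_imfset => T1 T2 /HS /tiling_remove_tile_notin T1t.
  move=> /HS /tiling_remove_tile_notin T2t /= e.
  by rewrite -(fsetU1K T1t) e fsetU1K.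
Qed.

Lemma tilings_card_with_tiles L' : uniq L' -> {subset L' <= L} ->
  exists S : {fset {fset tile}},
    (forall T, T \in S <-> is_tiling R T /\ has (mem T) L') /\
    #|` S| = \sum_(t <- L') k t.
Proof.
elim: L' => [|t L' IH] /=.
  by move=> _ _; exists fset0; split=> [T|]; rewrite ?inE ?big_nil //; split=> [|[]].
move=> /andP [tL' uL'] sub.
have tL : t \in L by apply: sub; rewrite mem_head.
have [St [HSt cardSt]] := tilings_card_with_tile tL.
have subL' : {subset L' <= L} by move=> x xL'; apply: sub; rewrite inE xL' orbT.
have [S' [HS' cardS']] := IH uL' subL'.
exists (St `|` S'); split.
- move=> T; rewrite in_fsetU; split.
  + by case/orP => [/HSt [? ->]|/HS' [? ->]]; rewrite ?orbT.
  + by case=> TR /orP [tT|L'T]; apply/orP; [left; apply/HSt|right; apply/HS'].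
- rewrite big_cons cardfsU -cardSt -cardS'.
  suff -> : St `&` S' = fset0 by rewrite cardfs0 subn0.
  apply/fsetP => T; rewrite in_fset0 in_fsetI; apply/negP.
  case/andP => /HSt [TR tT] /HS' [_ /hasP [t' t'L' t'T]].
  have /andP [ct _] := L_fit tL.
  have /andP [ct' _] := L_fit (subL' t' t'L').
  have tt' := tiling_tile_unique TR tT t'T ct ct'.
  by move: tL'; rewrite tt' t'L'.
Qed.

Lemma tilings_card_peel : tilings_card R (\sum_(t <- L) k t).
Proof.
have [S [HS cardS]] := tilings_card_with_tiles uniqL (fun t tL => tL).
exists S; split=> // T; rewrite HS; split=> [TR|[]//]; split=> //.
case: (TR) => inR _ cover; have [t tT ct] := cover c Rc.
apply/hasP; exists t => //; apply: L_complete; first exact: tiles_atP.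
by apply/allP => x; apply: inR.
Qed.

End PeelCell.

Local Open Scope ring_scope.

Lemma tilings_card_peel1 (R : cell -> bool) c k : R c ->
  (forall t, t \in tiles_at c -> all R (tile_cells t) -> t \in [:: inl c]) ->
  tilings_card (remove_tile R (inl c)) k -> tilings_card R k.
Proof.
move=> Rc complete Rck.
have -> : (k = \sum_(t <- [:: inl c : tile]) k)%N by rewrite big_seq1.
apply: (tilings_card_peel Rc) => // t /[!inE] /eqP -> //.
by rewrite /= mem_seq1 eqxx Rc.
Qed.

Lemma tilings_card_peel2 (R : cell -> bool) c T k1 k2 : R c ->
  c \in tile_cells (inr T) -> all R (tile_cells (inr T)) ->
  (forall t, t \in tiles_at c -> all R (tile_cells t) -> t \in [:: inl c; inr T]) ->
  tilings_card (remove_tile R (inl c)) k1 -> tilings_card (remove_tile R (inr T)) k2 ->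
  tilings_card R (k1 + k2).
Proof.
move=> Rc cT TR complete Rck1 Rck2.
have -> : (k1 + k2 = \sum_(t <- [:: inl c; inr T]) if t is inl _ then k1 else k2)%N.
  by rewrite big_cons big_seq1.
by apply: (tilings_card_peel Rc) => // t /[!inE] /orP [] /eqP -> //=;
  rewrite ?mem_head ?Rc ?cT ?TR.
Qed.

(* Number the cells of each row from the left, (a, b, up) being the (2a + ~~ up)-th cell of row b:
   [strip r0 r1] keeps the first r0 cells of the bottom row and the first r1 of the top row. *)
Definition strip (r0 r1 : int) (c : cell) : bool :=
  let: (a, b, up) := c in
  let i := 2 * a + (if up then 0 else 1) in
  (0 <= i) && ((b == 0) && (i < r0) || (b == 1) && (i < r1)).

Ltac strip_cells := rewrite /remove_tile /strip /= ?inE -?sum_eqE /= ?xpair_eqE /=; lia.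

Ltac strip_region := move=> [[a b] []]; strip_cells.

Ltac strip_tiles_at :=
  move=> t; rewrite /tiles_at !inE => /orP [/eqP ->|/or4P [] /eqP ->]; strip_cells.

Lemma peel_pad (m : int) k : 0 <= m ->
  tilings_card (strip (2 * m + 1) (2 * m)) k ->
  tilings_card (strip (2 * m + 2) (2 * m + 1)) k.
Proof.
move=> m0 H.
apply: (@tilings_card_peel1 _ (m, 0, false)); [strip_cells|strip_tiles_at|].
apply: (@tilings_card_peel1 _ (m, 1, true)); [strip_cells|strip_tiles_at|].
by apply: eq_tilings_card H; strip_region.
Qed.

Lemma peel_strip10 : tilings_card (strip 1 0) 1.
Proof.
apply: (@tilings_card_peel1 _ (0, 0, true)); [strip_cells|strip_tiles_at|].
by apply: tilings_card_empty; strip_region.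
Qed.

Lemma peel_notch (m : int) k1 k2 : 1 <= m ->
  tilings_card (strip (2 * m) (2 * m)) k1 ->
  tilings_card (strip (2 * m - 2) (2 * m - 2)) k2 ->
  tilings_card (strip (2 * m + 1) (2 * m)) (k1 + k2).
Proof.
move=> m1 H1 H2.
apply: (@tilings_card_peel2 _ (m, 0, true) (m - 1, 0, true));
  [strip_cells|strip_cells|strip_cells|strip_tiles_at| |].
  by apply: eq_tilings_card H1; strip_region.
apply: (@tilings_card_peel1 _ (m - 1, 1, false)); [strip_cells|strip_tiles_at|].
by apply: eq_tilings_card H2; strip_region.
Qed.

Lemma peel_trapezoid (m : int) k1 k2 : 0 <= m ->
  tilings_card (strip (2 * m + 2) (2 * m + 1)) k1 ->
  tilings_card (strip (2 * m) (2 * m)) k2 ->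
  tilings_card (strip (2 * m + 3) (2 * m + 1)) (k1 + k2).
Proof.
move=> m0 H1 H2.
apply: (@tilings_card_peel2 _ (m + 1, 0, true) (m, 0, true));
  [strip_cells|strip_cells|strip_cells|strip_tiles_at| |].
  by apply: eq_tilings_card H1; strip_region.
by apply: eq_tilings_card H2; strip_region.
Qed.

Lemma peel_parallelogram (m : int) k1 k2 : 2 <= m ->
  tilings_card (strip (2 * m) (2 * m - 1)) k1 ->
  tilings_card (strip (2 * m - 1) (2 * m - 3)) k2 ->
  tilings_card (strip (2 * m) (2 * m)) (k1 + k2).
Proof.
move=> m2 H1 H2.
apply: (@tilings_card_peel2 _ (m - 1, 1, false) (m - 2, 0, false));
  [strip_cells|strip_cells|strip_cells|strip_tiles_at| |].
  by apply: eq_tilings_card H1; strip_region.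
by apply: eq_tilings_card H2; strip_region.
Qed.

Lemma peel_strip22 k : tilings_card (strip 2 1) k -> tilings_card (strip 2 2) k.
Proof.
move=> H.
apply: (@tilings_card_peel1 _ (0, 1, false)); [strip_cells|strip_tiles_at|].
by apply: eq_tilings_card H; strip_region.
Qed.

Lemma regionA_strip (m : nat) : regionA m =1 strip (2 * m%:Z) (2 * m%:Z).
Proof. by move=> [[a b] []]; rewrite /regionA /strip /=; lia. Qed.

Lemma regionB_strip (m : nat) :
  regionB m.+1 =1 strip (2 * m%:Z + 3) (2 * m%:Z + 1).
Proof. by move=> [[a b] []]; rewrite /regionB /strip /=; lia. Qed.

Lemma A_tilings_card m k : tilings_card (strip (2 * m%:Z) (2 * m%:Z)) k -> A m = k.
Proof.
case: m => [|m] H.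
  by rewrite -(num_tilingsE H); apply/esym/num_tilingsE/tilings_card_empty; strip_region.
by apply: num_tilingsE; apply: eq_tilings_card H; apply: fsym; apply: regionA_strip.
Qed.

Lemma B_tilings_card m k :
  tilings_card (strip (2 * m%:Z + 3) (2 * m%:Z + 1)) k -> B m.+1 = k.
Proof.
by move=> H; apply: num_tilingsE; apply: eq_tilings_card H; apply: fsym; apply: regionB_strip.
Qed.

Definition A_prev (m : nat) : nat := if m is m'.+1 then A m' else 0.

Section SmallerParallelograms.

Variable m : nat.
Hypothesis card_A : forall j, (j <= m)%N -> tilings_card (strip (2 * j%:Z) (2 * j%:Z)) (A j).

Lemma tilings_card_pad :
  tilings_card (strip (2 * m%:Z + 2) (2 * m%:Z + 1)) (A m + A_prev m)%N.
Proof.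
apply: peel_pad; first lia.
case: m card_A => [|m'] cardA; first exact: peel_strip10.
apply: peel_notch; [lia|exact: cardA|].
by rewrite (_ : 2 * m'.+1%:Z - 2 = 2 * m'%:Z); [apply: cardA|lia].
Qed.

Lemma tilings_card_trapezoid :
  tilings_card (strip (2 * m%:Z + 3) (2 * m%:Z + 1)) (A m + A_prev m + A m)%N.
Proof. by apply: peel_trapezoid; [lia|exact: tilings_card_pad|exact: card_A]. Qed.

End SmallerParallelograms.

Lemma tilings_card_parallelogram_succ m :
  (forall j, (j <= m)%N -> tilings_card (strip (2 * j%:Z) (2 * j%:Z)) (A j)) ->
  tilings_card (strip (2 * m.+1%:Z) (2 * m.+1%:Z)) (A m + A_prev m + B m)%N.
Proof.
case: m => [|m] card_A; first exact: peel_strip22 (tilings_card_pad card_A).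
have card_A' j : (j <= m)%N -> _ := fun hj => card_A j (leqW hj).
rewrite (B_tilings_card (tilings_card_trapezoid card_A')).
apply: peel_parallelogram; first lia.
- have -> : strip (2 * m.+2%:Z) (2 * m.+2%:Z - 1) =
            strip (2 * m.+1%:Z + 2) (2 * m.+1%:Z + 1) by congr strip; lia.
  exact: tilings_card_pad card_A.
- have -> : strip (2 * m.+2%:Z - 1) (2 * m.+2%:Z - 3) =
            strip (2 * m%:Z + 3) (2 * m%:Z + 1) by congr strip; lia.
  exact: tilings_card_trapezoid card_A'.
Qed.

Lemma tilings_card_parallelogram m : tilings_card (strip (2 * m%:Z) (2 * m%:Z)) (A m).
Proof.
elim/ltn_ind: m => [[|m]] IH; first by apply: tilings_card_empty; strip_region.
have H := tilings_card_parallelogram_succ IH.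
by rewrite (A_tilings_card H).
Qed.

Lemma A_succ m : A m.+1 = (A m + A_prev m + B m)%N.
Proof.
by apply/A_tilings_card/tilings_card_parallelogram_succ => j _; apply: tilings_card_parallelogram.
Qed.

Lemma B_succ m : B m.+1 = (A m + A_prev m + A m)%N.
Proof.
by apply/B_tilings_card/tilings_card_trapezoid => j _; apply: tilings_card_parallelogram.
Qed.

Lemma A_sub_B m : (A m)%:Z - (B m)%:Z = (-1) ^+ m.
Proof.
elim: m => [//|m IH]; rewrite A_succ B_succ exprS -IH; lia.
Qed.

Lemma A_recurrence m : (A m.+2)%:Z = 2 * (A m.+1)%:Z + (A m)%:Z + (-1) ^+ m.
Proof.
rewrite [A m.+2]A_succ; change (A_prev m.+1) with (A m).
have := A_sub_B m.+1; rewrite exprS; lia.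
Qed.

Lemma A_recurrence4 m :
  (A (m + 4))%:Z = 6 * (A (m + 2))%:Z - (A m)%:Z - 2 * (-1) ^+ m.
Proof.
rewrite !addnS !addn0.
have := A_recurrence m; have := A_recurrence m.+1; have := A_recurrence m.+2.
rewrite !exprS; lia.
Qed.

Lemma B_recurrence4 m :
  (B (m + 4))%:Z = 6 * (B (m + 2))%:Z - (B m)%:Z + 2 * (-1) ^+ m.
Proof.
have := A_recurrence4 m; have := A_sub_B m; have := A_sub_B (m + 2); have := A_sub_B (m + 4).
rewrite !exprD; lia.
Qed.

Theorem mainTheorem4 (n : nat) (hn : (2 <= n)%N) :
  [/\ (A (2 * n))%:Z = 6 * (A (2 * n - 2))%:Z - (A (2 * n - 4))%:Z - 2,
      (A (2 * n + 1))%:Z = 6 * (A (2 * n - 1))%:Z - (A (2 * n - 3))%:Z + 2,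
      (B (2 * n))%:Z = 6 * (B (2 * n - 2))%:Z - (B (2 * n - 4))%:Z + 2
    & (B (2 * n + 1))%:Z = 6 * (B (2 * n - 1))%:Z - (B (2 * n - 3))%:Z - 2].
Proof.
have [p ->] : exists p, n = (p + 2)%N by exists (n - 2)%N; rewrite subnK.
have sign_even : (-1) ^+ (2 * p) = 1 :> int by rewrite exprM sqrrN !expr1n.
have sign_odd : (-1) ^+ (2 * p + 1) = -1 :> int by rewrite exprD sign_even expr1 mul1r.
have -> : (2 * (p + 2) - 2 = 2 * p + 2)%N by lia.
have -> : (2 * (p + 2) - 4 = 2 * p)%N by lia.
have -> : (2 * (p + 2) - 1 = 2 * p + 1 + 2)%N by lia.
have -> : (2 * (p + 2) - 3 = 2 * p + 1)%N by lia.
have -> : (2 * (p + 2) + 1 = 2 * p + 1 + 4)%N by lia.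
have -> : (2 * (p + 2) = 2 * p + 4)%N by lia.
rewrite A_recurrence4 (A_recurrence4 (2 * p + 1)) B_recurrence4 (B_recurrence4 (2 * p + 1)).
by rewrite sign_even sign_odd; split; lia.
Qed.
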